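(* Suppose the matrix $P$ satisfies simultaneously: (i) for all $n\in\mathbb N$ and all $c\in\{1,2,\dots,m_n\}$, $p_{c,n}\cdot p_{c-1,n}<0$; and (ii) the limits $\lim_{n\to\infty}\prod_{k=1}^{n}\frac{p_{0,k}}{q_{0,k}}$ and $\lim_{n\to\infty}\prod_{k=1}^{n}\frac{p_{m_k,k}}{q_{m_k,k}}$ are both different from $0$. Then $F$ has neither a finite nor an infinite derivative at any nega-$\tilde Q$-rational point of $[0,1]$.
   Context: Let $(m_n)_{n\ge1}$ be finite nonnegative integers and $\tilde Q=\|q_{i,n}\|$ ($i\in\{0,\dots,m_n\}$) with $q_{i,n}>0$, $\sum_{i}q_{i,n}=1$ for all $n$, and $\prod_n q_{i_n,n}=0$ for every digit sequence $(i_n)$. Put $a_{0,n}=0$, $a_{i,n}=\sum_{l<i}q_{l,n}$; $\Delta^{\tilde Q}_{j_1j_2\dots}=a_{j_1,1}+\sum_{n\ge2}a_{j_n,n}\prod_{l<n}q_{j_l,l}$. The nega-$\tilde Q$-representation $x=\Delta^{-\tilde Q}_{i_1i_2\dots}$ means $x=\Delta^{\tilde Q}_{i_1[m_2-i_2]i_3[m_4-i_4]\dots}$; every $x\in[0,1]$ has one. The nega-$\tilde Q$-rational points are the numbers $\Delta^{-\tilde Q}_{i_1\dots i_{n-1}i_nm_{n+1}0m_{n+3}0m_{n+5}\dots}=\Delta^{-\tilde Q}_{i_1\dots i_{n-1}[i_n-1]0m_{n+2}0m_{n+4}\dots}$ with $i_n\ne0$ (they have two representations). Let $P=\|p_{i,n}\|$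 have the same shape with $p_{i,n}\in(-1,1)$, $\sum_ip_{i,n}=1$, $\prod_n|p_{i_n,n}|=0$ for every digit sequence, $0<\sum_{i<c}p_{i,n}<1$ for $c\in\{1,\dots,m_n\}$. Put $\beta_{0,n}=0$, $\beta_{c,n}=\sum_{i<c}p_{i,n}$; for odd $n$: $\tilde p_{i,n}=p_{i,n}$, $\tilde\beta_{i,n}=\beta_{i,n}$; for even $n$: $\tilde p_{i,n}=p_{m_n-i,n}$, $\tilde\beta_{i,n}=\beta_{m_n-i,n}$. $F(x)=\beta_{i_1,1}+\sum_{k\ge2}\tilde\beta_{i_k,k}\prod_{j<k}\tilde p_{i_j,j}$ for $x=\Delta^{-\tilde Q}_{i_1i_2\dots}$ (independent of the representation); $F$ is the unique bounded solution on $[0,1]$ of the system $f(\hat\varphi^k(x))=\tilde\beta_{i_{k+1}(x),k+1}+\tilde p_{i_{k+1}(x),k+1}f(\hat\varphi^{k+1}(x))$, $k\ge0$, where $\hat\varphi$ is the shift of $\tilde Q$-digits. *)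

From Stdlib Require Import Reals ClassicalEpsilon.
From Coquelicot Require Import Coquelicot.
Open Scope R_scope.

(* Indexing convention: the paper's column n >= 1 is index n-1 >= 0 here.
   m k = m_{k+1},  q i k = q_{i,k+1},  p i k = p_{i,k+1},  d k = i_{k+1}.
   Thus the paper's odd columns are the even indices here. *)

Fixpoint psum (f : nat -> R) (n : nat) : R :=
  match n with O => 0 | S n' => psum f n' + f n' end.
Fixpoint pprod (f : nat -> R) (n : nat) : R :=
  match n with O => 1 | S n' => pprod f n' * f n' end.

Definition valid (m : nat -> nat) (d : nat -> nat) : Prop :=
  forall k, (d k <= m k)%nat.

Definition aQ (q : nat -> nat -> R) (i k : nat) : R := psum (fun l => q l k) i.

Definition DeltaQ (q : nat -> nat -> R) (d : nat -> nat) : R :=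
  Series (fun k => aQ q (d k) k * pprod (fun l => q (d l) l) k).

(* nega-digits: paper even positions (odd indices here) are replaced by m - i *)
Definition negd (m : nat -> nat) (d : nat -> nat) (k : nat) : nat :=
  if Nat.odd k then (m k - d k)%nat else d k.

Definition DeltaNeg (m : nat -> nat) (q : nat -> nat -> R) (d : nat -> nat) : R :=
  DeltaQ q (negd m d).

Definition betaP (p : nat -> nat -> R) (c k : nat) : R := psum (fun i => p i k) c.
Definition tp (m : nat -> nat) (p : nat -> nat -> R) (i k : nat) : R :=
  if Nat.odd k then p (m k - i)%nat k else p i k.
Definition tbeta (m : nat -> nat) (p : nat -> nat -> R) (i k : nat) : R :=
  if Nat.odd k then betaP p (m k - i)%nat k else betaP p i k.

Definition Frep (m : nat -> nat) (p : nat -> nat -> R) (d : nat -> nat) : R :=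
  Series (fun k => tbeta m p (d k) k * pprod (fun l => tp m p (d l) l) k).

(* F(x) := Frep of (some) nega-Q~-representation of x
   (the paper shows the value does not depend on the representation). *)
Definition F (m : nat -> nat) (q p : nat -> nat -> R) (x : R) : R :=
  Frep m p (epsilon (inhabits (fun _ : nat => O))
                    (fun d => valid m d /\ DeltaNeg m q d = x)).

Definition QtildeOK (m : nat -> nat) (q : nat -> nat -> R) : Prop :=
  (forall n i, (i <= m n)%nat -> 0 < q i n) /\
  (forall n, psum (fun i => q i n) (S (m n)) = 1) /\
  (forall d, valid m d -> is_lim_seq (fun N => pprod (fun l => q (d l) l) N) 0).

Definition POK (m : nat -> nat) (p : nat -> nat -> R) : Prop :=
  (forall n i, (i <= m n)%nat -> -1 < p i n < 1) /\
  (forall n, psum (fun i => p i n) (S (m n)) = 1) /\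
  (forall d, valid m d -> is_lim_seq (fun N => pprod (fun l => Rabs (p (d l) l)) N) 0) /\
  (forall n c, (1 <= c <= m n)%nat -> 0 < betaP p c n < 1).

Definition NegaRational (m : nat -> nat) (q : nat -> nat -> R) (x : R) : Prop :=
  exists (d : nat -> nat) (N : nat),
    valid m d /\ d N <> O /\
    (forall k, (N < k)%nat -> d k = if Nat.odd (k - N) then m k else O) /\
    x = DeltaNeg m q d.

From Stdlib Require Import Reals Lra Lia Wf_nat ClassicalEpsilon Classical.
From Coquelicot Require Import Coquelicot.
Open Scope R_scope.

(* A point with two Q~-expansions has them of the form (v, c, 0, 0, ...) and
   (v, c-1, m, m, ...), and the P-expansions of these two digit sequences agree;
   so F maps the Q~-expansion of any digit sequence to its P-expansion.  At a
   nega-Q~-rational point x, the right difference quotients of F along the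
   cylinder lengths of the first expansion are the products of the ratios p/q
   of its digits; from index N+1 on these ratios are p_0/q_0, so the quotients
   tend to a finite limit with the sign of p_{c,N}, because
   lim prod p_0/q_0 > 0.  Likewise the left quotients, taken along the second
   expansion, tend to a limit with the sign of p_{c-1,N}.  These one-sided
   limits have opposite signs, so F has no derivative at x. *)

Definition prefix_prod (w : nat -> nat -> R) (j : nat -> nat) (n : nat) : R :=
  pprod (fun l => w (j l) l) n.

Definition prefix_sum (w : nat -> nat -> R) (j : nat -> nat) (n : nat) : R :=
  psum (fun k => betaP w (j k) k * prefix_prod w j k) n.

(* [DeltaQ q j] is [expansion q j] and [Frep m p d] is [expansion p (negd m d)]. *)
Definition expansion (w : nat -> nat -> R) (j : nat -> nat) : R :=
  Series (fun k => betaP w (j k) k * prefix_prod w j k).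

Lemma betaP_0 w k : betaP w 0 k = 0.
Proof. reflexivity. Qed.

Lemma betaP_S w c k : betaP w (S c) k = betaP w c k + w c k.
Proof. reflexivity. Qed.

Lemma prefix_prod_S w j n : prefix_prod w j (S n) = prefix_prod w j n * w (j n) n.
Proof. reflexivity. Qed.

Lemma prefix_sum_S w j n :
  prefix_sum w j (S n) = prefix_sum w j n + betaP w (j n) n * prefix_prod w j n.
Proof. reflexivity. Qed.

Lemma prefix_prod_pos w j n : (forall k, 0 < w (j k) k) -> 0 < prefix_prod w j n.
Proof.
  intros Hw. induction n as [|n IH]; [unfold prefix_prod; simpl; lra|].
  rewrite prefix_prod_S. now apply Rmult_lt_0_compat.
Qed.

Lemma prefix_prod_neq0 w j n : (forall k, w (j k) k <> 0) -> prefix_prod w j n <> 0.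
Proof.
  intros Hw. induction n as [|n IH]; [unfold prefix_prod; simpl; lra|].
  rewrite prefix_prod_S. now apply Rmult_integral_contrapositive_currified.
Qed.

Lemma prefix_agree w j j' n : (forall k, (k < n)%nat -> j k = j' k) ->
  prefix_sum w j n = prefix_sum w j' n /\ prefix_prod w j n = prefix_prod w j' n.
Proof.
  induction n as [|n IH]; intros Hjj'; [split; reflexivity|].
  destruct IH as [Hs Hp]; [intros k Hk; apply Hjj'; lia|].
  rewrite !prefix_sum_S, !prefix_prod_S, Hs, Hp, (Hjj' n) by lia.
  split; reflexivity.
Qed.

Lemma prefix_prod_tail_lim w j t n0 (L : R) :
  (forall k, (n0 <= k)%nat -> j k = t k) -> prefix_prod w t n0 <> 0 ->
  is_lim_seq (prefix_prod w t) L ->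
  is_lim_seq (prefix_prod w j) (prefix_prod w j n0 * (L / prefix_prod w t n0)).
Proof.
  intros Htail Ht0 Hlim.
  set (C := prefix_prod w j n0 / prefix_prod w t n0).
  apply (is_lim_seq_ext_loc (fun k => C * prefix_prod w t k)).
  - exists n0. intros k Hk. induction Hk as [|k Hk IH].
    + unfold C. field. exact Ht0.
    + rewrite !prefix_prod_S, <- IH, (Htail k Hk). ring.
  - replace (prefix_prod w j n0 * (L / prefix_prod w t n0)) with (C * L)
      by (unfold C; field; exact Ht0).
    exact (is_lim_seq_scal_l _ C L Hlim).
Qed.

Lemma sum_n_psum (a : nat -> R) n : sum_n a n = psum a (S n).
Proof.
  induction n as [|n IH]; [rewrite sum_O; simpl; ring|].
  rewrite sum_Sn, IH. simpl. unfold plus. simpl. ring.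
Qed.

Lemma expansion_of_lim w j (l : R) : is_lim_seq (prefix_sum w j) l -> expansion w j = l.
Proof.
  intros Hl. apply is_series_unique.
  enough (H : is_lim_seq (sum_n (fun k => betaP w (j k) k * prefix_prod w j k)) l)
    by exact H.
  apply (is_lim_seq_incr_1 _ l) in Hl.
  exact (is_lim_seq_ext _ _ _ (fun n => eq_sym (sum_n_psum _ n)) Hl).
Qed.

Lemma expansion_ext w j j' : (forall k, j k = j' k) -> expansion w j = expansion w j'.
Proof.
  intros Hjj'. apply Series_ext. intros k.
  rewrite Hjj', (proj2 (prefix_agree w j j' k (fun i _ => Hjj' i))). reflexivity.
Qed.

Lemma expansion_zero_tail w j n : (forall k, (n <= k)%nat -> j k = O) ->
  expansion w j = prefix_sum w j n.
Proof.
  intros Hj. apply expansion_of_lim.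
  apply (is_lim_seq_ext_loc (fun _ => prefix_sum w j n)); [|apply is_lim_seq_const].
  exists n. intros k Hk. induction Hk as [|k Hk IH]; [reflexivity|].
  rewrite prefix_sum_S, (Hj k Hk), betaP_0, <- IH. ring.
Qed.

Definition splice (j : nat -> nat) (n : nat) (t : nat -> nat) (k : nat) : nat :=
  if (k <? n)%nat then j k else t k.

Lemma splice_ge j n t k : (n <= k)%nat -> splice j n t k = t k.
Proof. intros Hk. unfold splice. now rewrite (proj2 (Nat.ltb_ge k n) Hk). Qed.

Lemma splice_valid m j n t : valid m j -> valid m t -> valid m (splice j n t).
Proof. intros Hj Ht k. unfold splice. destruct (k <? n)%nat; auto. Qed.

Lemma prefix_splice w j n t :
  prefix_sum w (splice j n t) n = prefix_sum w j n /\
  prefix_prod w (splice j n t) n = prefix_prod w j n.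
Proof.
  apply prefix_agree. intros k Hk. unfold splice.
  now rewrite (proj2 (Nat.ltb_lt k n) Hk).
Qed.

Lemma expansion_splice_zero w j n :
  expansion w (splice j n (fun _ => O)) = prefix_sum w j n.
Proof.
  rewrite (expansion_zero_tail w _ n) by (intros k Hk; now apply splice_ge).
  apply prefix_splice.
Qed.

Definition glue (v : nat -> nat) (N c : nat) (t : nat -> nat) : nat -> nat :=
  splice v N (fun k => if (k =? N)%nat then c else t k).

Lemma glue_valid m v N c t :
  valid m v -> (c <= m N)%nat -> valid m t -> valid m (glue v N c t).
Proof.
  intros Hv Hc Ht. apply splice_valid; [exact Hv|].
  intros k. destruct (Nat.eqb_spec k N); [now subst|apply Ht].
Qed.

Lemma glue_tail v N c t k : (S N <= k)%nat -> glue v N c t k = t k.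
Proof.
  intros Hk. unfold glue. rewrite splice_ge by lia.
  destruct (Nat.eqb_spec k N); [lia|reflexivity].
Qed.

Lemma prefix_glue w v N c t :
  prefix_sum w (glue v N c t) (S N) = prefix_sum w v N + betaP w c N * prefix_prod w v N /\
  prefix_prod w (glue v N c t) (S N) = prefix_prod w v N * w c N.
Proof.
  assert (HN : glue v N c t N = c)
    by (unfold glue; rewrite splice_ge, Nat.eqb_refl; lia).
  rewrite prefix_sum_S, prefix_prod_S, HN. unfold glue.
  destruct (prefix_splice w v N (fun k => if (k =? N)%nat then c else t k)) as [Hs Hp].
  rewrite Hs, Hp. split; reflexivity.
Qed.

Lemma expansion_glue_zero w v N c :
  expansion w (glue v N c (fun _ => O)) =
  prefix_sum w v N + betaP w c N * prefix_prod w v N.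
Proof.
  rewrite (expansion_zero_tail w _ (S N)) by (intros k Hk; now apply glue_tail).
  apply prefix_glue.
Qed.

Section Expansion.

Variables (m : nat -> nat) (w : nat -> nat -> R).
Hypothesis w_col : forall k, betaP w (S (m k)) k = 1.
Hypothesis w_vanish : forall j, valid m j -> is_lim_seq (prefix_prod w j) 0.

Lemma expansion_max_tail j n : valid m j -> (forall k, (n <= k)%nat -> j k = m k) ->
  expansion w j = prefix_sum w j n + prefix_prod w j n.
Proof.
  intros Hj Htail.
  set (C := prefix_sum w j n + prefix_prod w j n).
  assert (Hinv : forall k, (n <= k)%nat -> prefix_sum w j k + prefix_prod w j k = C).
  { intros k Hk. induction Hk as [|k Hk IH]; [reflexivity|].
    pose proof (w_col k) as Hcol. rewrite betaP_S in Hcol.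
    rewrite prefix_sum_S, prefix_prod_S, (Htail k Hk), <- IH.
    replace (w (m k) k) with (1 - betaP w (m k) k) by lra. ring. }
  assert (Hlim : is_lim_seq (fun k => C - prefix_prod w j k) (C - 0))
    by (apply is_lim_seq_minus'; [apply is_lim_seq_const|exact (w_vanish j Hj)]).
  rewrite Rminus_0_r in Hlim.
  apply expansion_of_lim. refine (is_lim_seq_ext_loc _ _ _ _ Hlim).
  exists n. intros k Hk. rewrite <- (Hinv k Hk). ring.
Qed.

Lemma expansion_splice_max j n : valid m j ->
  expansion w (splice j n m) = prefix_sum w j n + prefix_prod w j n.
Proof.
  intros Hj. destruct (prefix_splice w j n m) as [Hs Hp]. rewrite <- Hs, <- Hp.
  apply expansion_max_tail.
  - apply splice_valid; [exact Hj|intros k; apply le_n].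
  - intros k Hk. now apply splice_ge.
Qed.

Lemma expansion_glue_max v N c : valid m v -> (1 <= c <= m N)%nat ->
  expansion w (glue v N (c - 1) m) = prefix_sum w v N + betaP w c N * prefix_prod w v N.
Proof.
  intros Hv Hc.
  rewrite (expansion_max_tail _ (S N)).
  - destruct (prefix_glue w v N (c - 1) m) as [Hs Hp]. rewrite Hs, Hp.
    replace (betaP w c N) with (betaP w (c - 1) N + w (c - 1)%nat N)
      by (rewrite <- betaP_S; f_equal; lia).
    ring.
  - apply glue_valid; [exact Hv|lia|intros k; apply le_n].
  - intros k Hk. now apply glue_tail.
Qed.

End Expansion.

Section PositiveWeights.

Variables (m : nat -> nat) (w : nat -> nat -> R).
Hypothesis w_pos : forall n i, (i <= m n)%nat -> 0 < w i n.
Hypothesis w_col : forall k, betaP w (S (m k)) k = 1.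

Lemma betaP_lt k c c' : (c < c' <= S (m k))%nat -> betaP w c k < betaP w c' k.
Proof.
  intros [Hlt Hle]. induction Hlt as [|c' Hlt IH]; rewrite betaP_S.
  - pose proof (w_pos k c ltac:(lia)). lra.
  - pose proof (w_pos k c' ltac:(lia)). specialize (IH ltac:(lia)). lra.
Qed.

Lemma betaP_le k c c' : (c <= c' <= S (m k))%nat -> betaP w c k <= betaP w c' k.
Proof.
  intros Hc. destruct (Nat.eq_dec c c') as [->|Hne]; [lra|].
  left. apply betaP_lt. lia.
Qed.

Lemma prefix_prod_valid_pos j n : valid m j -> 0 < prefix_prod w j n.
Proof. intros Hj. apply prefix_prod_pos. intros k. apply w_pos, Hj. Qed.

Lemma prefix_prod_ratio v j n : valid m j ->
  prefix_prod (fun i k => v i k / w i k) j n = prefix_prod v j n / prefix_prod w j n.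
Proof.
  intros Hj. induction n as [|n IH]; [unfold prefix_prod; simpl; field|].
  pose proof (w_pos n (j n) (Hj n)). pose proof (prefix_prod_valid_pos j n Hj).
  rewrite !prefix_prod_S, IH. field. lra.
Qed.

Lemma cylinder_step j n : valid m j ->
  prefix_sum w j n <= prefix_sum w j (S n) /\
  prefix_sum w j (S n) + prefix_prod w j (S n) <= prefix_sum w j n + prefix_prod w j n.
Proof.
  intros Hj. pose proof (prefix_prod_valid_pos j n Hj). pose proof (Hj n).
  assert (Hb0 : 0 <= betaP w (j n) n)
    by (rewrite <- (betaP_0 w n); apply betaP_le; lia).
  assert (Hb1 : betaP w (S (j n)) n <= 1)
    by (rewrite <- (w_col n); apply betaP_le; lia).
  rewrite betaP_S in Hb1. rewrite prefix_sum_S, prefix_prod_S. split; nra.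
Qed.

Lemma cylinders_nested j n n' : valid m j -> (n <= n')%nat ->
  prefix_sum w j n <= prefix_sum w j n' /\
  prefix_sum w j n' + prefix_prod w j n' <= prefix_sum w j n + prefix_prod w j n.
Proof.
  intros Hj Hn. induction Hn as [|n' Hn IH]; [lra|].
  pose proof (cylinder_step j n' Hj). lra.
Qed.

Lemma expansion_in_cylinder j n : valid m j ->
  prefix_sum w j n <= expansion w j <= prefix_sum w j n + prefix_prod w j n.
Proof.
  intros Hj.
  assert (Hup : forall n' k,
            prefix_sum w j (k + n') <= prefix_sum w j n' + prefix_prod w j n').
  { intros n' k. pose proof (cylinders_nested j n' (k + n') Hj (Nat.le_add_l n' k)).
    pose proof (prefix_prod_valid_pos j (k + n') Hj). lra. }
  destruct (ex_finite_lim_seq_incr (prefix_sum w j) 1) as [l Hl].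
  - intros k. apply (cylinder_step j k Hj).
  - intros k. specialize (Hup O k). rewrite Nat.add_0_r in Hup.
    change (prefix_sum w j k <= 0 + 1) in Hup. lra.
  - rewrite (expansion_of_lim w j l Hl).
    apply (is_lim_seq_incr_n _ n) in Hl. split.
    + change (Rbar_le (prefix_sum w j n) l).
      apply (is_lim_seq_le _ _ _ _
        (fun k => proj1 (cylinders_nested j n (k + n) Hj (Nat.le_add_l n k)))
        (is_lim_seq_const _) Hl).
    + change (Rbar_le l (prefix_sum w j n + prefix_prod w j n)).
      exact (is_lim_seq_le _ _ _ _ (Hup n) Hl (is_lim_seq_const _)).
Qed.

Lemma max_tail_of_upper_endpoint j n : valid m j ->
  expansion w j = prefix_sum w j n + prefix_prod w j n ->
  forall k, (n <= k)%nat -> j k = m k.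
Proof.
  intros Hj HV k Hk. pose proof (Hj k).
  destruct (Nat.eq_dec (j k) (m k)) as [E|Hne]; [exact E|exfalso].
  assert (Hb : betaP w (S (j k)) k < 1) by (rewrite <- (w_col k); apply betaP_lt; lia).
  pose proof (expansion_in_cylinder j (S k) Hj) as [_ Hup].
  pose proof (cylinders_nested j n k Hj Hk) as [_ Hnest].
  pose proof (prefix_prod_valid_pos j k Hj).
  rewrite prefix_sum_S, prefix_prod_S in Hup. rewrite betaP_S in Hb. nra.
Qed.

Lemma zero_tail_of_lower_endpoint j n : valid m j ->
  expansion w j = prefix_sum w j n -> forall k, (n <= k)%nat -> j k = O.
Proof.
  intros Hj HV k Hk. pose proof (Hj k).
  destruct (Nat.eq_dec (j k) O) as [E|Hne]; [exact E|exfalso].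
  assert (Hb : 0 < betaP w (j k) k) by (rewrite <- (betaP_0 w k); apply betaP_lt; lia).
  pose proof (expansion_in_cylinder j (S k) Hj) as [Hlow _].
  pose proof (cylinders_nested j n k Hj Hk) as [Hnest _].
  pose proof (prefix_prod_valid_pos j k Hj).
  rewrite prefix_sum_S in Hlow. nra.
Qed.

(* Equality squeezes [expansion w j] between the two ends of adjacent cylinders. *)
Lemma expansion_eq_first_difference j j' n : valid m j -> valid m j' ->
  (forall k, (k < n)%nat -> j k = j' k) -> (j n < j' n)%nat ->
  expansion w j = expansion w j' ->
  j' n = S (j n) /\ (forall k, (S n <= k)%nat -> j k = m k) /\
  (forall k, (S n <= k)%nat -> j' k = O).
Proof.
  intros Hj Hj' Hpre Hlt HV. pose proof (Hj' n).
  destruct (prefix_agree w j j' n Hpre) as [Hs Hp].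
  pose proof (prefix_prod_valid_pos j n Hj).
  pose proof (expansion_in_cylinder j (S n) Hj) as [_ Hup].
  pose proof (expansion_in_cylinder j' (S n) Hj') as [Hlow _].
  rewrite prefix_sum_S, prefix_prod_S in Hup.
  rewrite prefix_sum_S, <- Hs, <- Hp in Hlow.
  assert (Hb : betaP w (S (j n)) n <= betaP w (j' n) n) by (apply betaP_le; lia).
  rewrite betaP_S in Hb.
  assert (Hbeq : betaP w (j n) n + w (j n) n = betaP w (j' n) n) by nra.
  split; [|split].
  - destruct (Nat.eq_dec (j' n) (S (j n))) as [E|Hne]; [exact E|exfalso].
    pose proof (betaP_lt n (S (j n)) (j' n) ltac:(lia)). rewrite betaP_S in *. lra.
  - apply (max_tail_of_upper_endpoint j (S n) Hj).
    rewrite prefix_sum_S, prefix_prod_S. nra.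
  - apply (zero_tail_of_lower_endpoint j' (S n) Hj').
    rewrite prefix_sum_S, <- Hs, <- Hp. nra.
Qed.

End PositiveWeights.

Lemma QtildeOK_pos m q : QtildeOK m q -> forall n i, (i <= m n)%nat -> 0 < q i n.
Proof. intros HQ. apply HQ. Qed.

Lemma QtildeOK_col m q : QtildeOK m q -> forall k, betaP q (S (m k)) k = 1.
Proof. intros HQ. apply HQ. Qed.

Lemma QtildeOK_vanish m q : QtildeOK m q ->
  forall j, valid m j -> is_lim_seq (prefix_prod q j) 0.
Proof. intros HQ. apply HQ. Qed.

Lemma POK_col m p : POK m p -> forall k, betaP p (S (m k)) k = 1.
Proof. intros HP. apply HP. Qed.

Lemma Rabs_pprod f n : Rabs (pprod f n) = pprod (fun l => Rabs (f l)) n.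
Proof. induction n as [|n IH]; simpl; [apply Rabs_R1|now rewrite Rabs_mult, IH]. Qed.

Lemma POK_vanish m p : POK m p ->
  forall j, valid m j -> is_lim_seq (prefix_prod p j) 0.
Proof.
  intros (_ & _ & Habs & _) j Hj. apply is_lim_seq_abs_0.
  apply (is_lim_seq_ext _ _ _ (fun n => eq_sym (Rabs_pprod _ n)) (Habs j Hj)).
Qed.

Lemma POK_m_pos m p : POK m p -> forall n, (1 <= m n)%nat.
Proof.
  intros (Hb & Hs & _) n. destruct (m n) eqn:E; [exfalso|lia].
  pose proof (Hb n O ltac:(lia)). specialize (Hs n). rewrite E in Hs.
  simpl in Hs. lra.
Qed.

Lemma POK_p0_pos m p : POK m p -> forall n, 0 < p O n.
Proof.
  intros HP n. pose proof (POK_m_pos m p HP n).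
  destruct HP as (_ & _ & _ & Hb). specialize (Hb n 1%nat ltac:(lia)).
  unfold betaP in Hb. simpl in Hb. lra.
Qed.

Lemma POK_pm_pos m p : POK m p -> forall n, 0 < p (m n) n.
Proof.
  intros HP n. pose proof (POK_m_pos m p HP n). pose proof (POK_col m p HP n) as Hcol.
  destruct HP as (_ & _ & _ & Hb). specialize (Hb n (m n) ltac:(lia)).
  rewrite betaP_S in Hcol. lra.
Qed.

Lemma first_difference (j j' : nat -> nat) k : j k <> j' k ->
  exists n, j n <> j' n /\ forall i, (i < n)%nat -> j i = j' i.
Proof.
  induction k as [k IH] using lt_wf_ind. intros Hk.
  destruct (classic (forall i, (i < k)%nat -> j i = j' i)) as [Hall|Hnot];
    [now exists k|].
  apply not_all_ex_not in Hnot as [i Hi]. apply imply_to_and in Hi as [Hik Hji].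
  exact (IH i Hik Hji).
Qed.

Lemma expansion_transfer_at m q p j j' n : QtildeOK m q -> POK m p ->
  valid m j -> valid m j' -> (forall k, (k < n)%nat -> j k = j' k) ->
  (j n < j' n)%nat -> expansion q j = expansion q j' -> expansion p j = expansion p j'.
Proof.
  intros HQ HP Hj Hj' Hpre Hlt HV.
  destruct (expansion_eq_first_difference m q (QtildeOK_pos m q HQ) (QtildeOK_col m q HQ)
              j j' n Hj Hj' Hpre Hlt HV) as (Hn & Hmax & Hzero).
  rewrite (expansion_max_tail m p (POK_col m p HP) (POK_vanish m p HP) j (S n) Hj Hmax).
  rewrite (expansion_zero_tail p j' (S n) Hzero).
  destruct (prefix_agree p j j' n Hpre) as [Hs Hp].
  rewrite !prefix_sum_S, prefix_prod_S, Hn, Hs, Hp, betaP_S. ring.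
Qed.

Lemma expansion_transfer m q p j j' : QtildeOK m q -> POK m p -> valid m j -> valid m j' ->
  expansion q j = expansion q j' -> expansion p j = expansion p j'.
Proof.
  intros HQ HP Hj Hj' HV.
  destruct (classic (exists k, j k <> j' k)) as [[k Hk]|Hsame].
  - destruct (first_difference j j' k Hk) as (n & Hn & Hpre).
    destruct (Nat.lt_total (j n) (j' n)) as [Hlt|[Heq|Hgt]]; [|contradiction|].
    + exact (expansion_transfer_at m q p j j' n HQ HP Hj Hj' Hpre Hlt HV).
    + symmetry. apply (expansion_transfer_at m q p j' j n); auto.
      intros i Hi. symmetry. auto.
  - apply expansion_ext. intros k. apply NNPP. intros Hk. apply Hsame. now exists k.
Qed.

Lemma negd_valid m d : valid m d -> valid m (negd m d).
Proof. intros Hd k. unfold negd. destruct (Nat.odd k); [lia|apply Hd]. Qed.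

Lemma negd_involutive m d k : valid m d -> negd m (negd m d) k = d k.
Proof. intros Hd. unfold negd. destruct (Nat.odd k); [pose proof (Hd k); lia|reflexivity]. Qed.

Lemma pprod_ext f g n : (forall l, f l = g l) -> pprod f n = pprod g n.
Proof. intros Hfg. induction n as [|n IH]; simpl; [reflexivity|now rewrite IH, Hfg]. Qed.

Lemma Frep_expansion m p d : Frep m p d = expansion p (negd m d).
Proof.
  apply Series_ext. intros k. unfold tbeta, prefix_prod, tp, negd. f_equal.
  - destruct (Nat.odd k); reflexivity.
  - apply pprod_ext. intros l. destruct (Nat.odd l); reflexivity.
Qed.

Lemma F_expansion m q p j : QtildeOK m q -> POK m p -> valid m j ->
  F m q p (expansion q j) = expansion p j.
Proof.
  intros HQ HP Hj. unfold F.
  destruct (epsilon_spec (inhabits (fun _ : nat => O))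
              (fun d => valid m d /\ DeltaNeg m q d = expansion q j)) as [Hd Hval].
  { exists (negd m j). split; [now apply negd_valid|].
    apply expansion_ext. intros k. now apply negd_involutive. }
  rewrite Frep_expansion.
  exact (expansion_transfer m q p _ _ HQ HP (negd_valid m _ Hd) Hj Hval).
Qed.

Definition ratio (p q : nat -> nat -> R) (i k : nat) : R := p i k / q i k.

Lemma F_slope_zero_tail m q p j n : QtildeOK m q -> POK m p -> valid m j ->
  (forall k, (n <= k)%nat -> j k = O) ->
  (F m q p (expansion q j + prefix_prod q j n) - F m q p (expansion q j))
    / prefix_prod q j n = prefix_prod (ratio p q) j n.
Proof.
  intros HQ HP Hj Hzero.
  pose proof (prefix_prod_valid_pos m q (QtildeOK_pos m q HQ) j n Hj).
  assert (Hvs : valid m (splice j n m))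
    by (apply splice_valid; [exact Hj|intros k; apply le_n]).
  rewrite (expansion_zero_tail q j n Hzero) at 1.
  rewrite <- (expansion_splice_max m q (QtildeOK_col m q HQ) (QtildeOK_vanish m q HQ) j n Hj).
  rewrite !F_expansion by assumption.
  rewrite (expansion_splice_max m p (POK_col m p HP) (POK_vanish m p HP) j n Hj).
  rewrite (expansion_zero_tail p j n Hzero).
  unfold ratio. rewrite (prefix_prod_ratio m q (QtildeOK_pos m q HQ) p j n Hj).
  field. lra.
Qed.

Lemma F_slope_max_tail m q p j n : QtildeOK m q -> POK m p -> valid m j ->
  (forall k, (n <= k)%nat -> j k = m k) ->
  (F m q p (expansion q j + - prefix_prod q j n) - F m q p (expansion q j))
    / - prefix_prod q j n = prefix_prod (ratio p q) j n.
Proof.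
  intros HQ HP Hj Hmax.
  pose proof (prefix_prod_valid_pos m q (QtildeOK_pos m q HQ) j n Hj).
  assert (Hvs : valid m (splice j n (fun _ => O)))
    by (apply splice_valid; [exact Hj|intros k; apply Nat.le_0_l]).
  assert (Hleft : expansion q j + - prefix_prod q j n = expansion q (splice j n (fun _ => O))).
  { rewrite (expansion_max_tail m q (QtildeOK_col m q HQ) (QtildeOK_vanish m q HQ)
              j n Hj Hmax).
    rewrite expansion_splice_zero. ring. }
  rewrite Hleft, !F_expansion by assumption.
  rewrite expansion_splice_zero.
  rewrite (expansion_max_tail m p (POK_col m p HP) (POK_vanish m p HP) j n Hj Hmax).
  unfold ratio. rewrite (prefix_prod_ratio m q (QtildeOK_pos m q HQ) p j n Hj).
  field. lra.
Qed.

Lemma negd_tail m d N : (forall k, (N < k)%nat -> d k = if Nat.odd (k - N) then m k else O) ->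
  forall k, (N < k)%nat -> negd m d k = if Nat.odd N then m k else O.
Proof.
  intros Htail k Hk. unfold negd. rewrite Htail by lia.
  replace (Nat.odd k) with (xorb (Nat.odd N) (Nat.odd (k - N)))
    by (rewrite <- Nat.odd_add; f_equal; lia).
  destruct (Nat.odd N), (Nat.odd (k - N)); simpl; lia.
Qed.

Lemma NegaRational_glue m q x : QtildeOK m q -> NegaRational m q x ->
  exists v N c, valid m v /\ (1 <= c <= m N)%nat /\
                x = expansion q (glue v N c (fun _ => O)).
Proof.
  intros HQ (d & N & Hd & HdN & Htail & ->).
  pose proof (negd_tail m d N Htail) as Hjtail. pose proof (negd_valid m d Hd) as Hj.
  change (DeltaNeg m q d) with (expansion q (negd m d)). pose proof (Hd N).
  destruct (Nat.odd N) eqn:HN.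
  - assert (HjN : negd m d N = (m N - d N)%nat) by (unfold negd; now rewrite HN).
    exists (negd m d), N, (S (negd m d N)). split; [exact Hj|split; [lia|]].
    rewrite expansion_glue_zero.
    rewrite <- (expansion_glue_max m q (QtildeOK_col m q HQ) (QtildeOK_vanish m q HQ))
      by (auto; lia).
    apply expansion_ext. intros k. unfold glue, splice.
    destruct (Nat.ltb_spec k N); [reflexivity|].
    destruct (Nat.eqb_spec k N) as [->|]; [lia|].
    now rewrite (Hjtail k ltac:(lia)).
  - assert (HjN : negd m d N = d N) by (unfold negd; now rewrite HN).
    exists (negd m d), N, (negd m d N). split; [exact Hj|split; [lia|]].
    apply expansion_ext. intros k. unfold glue, splice.
    destruct (Nat.ltb_spec k N); [reflexivity|].
    destruct (Nat.eqb_spec k N) as [->|]; [reflexivity|].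
    now rewrite (Hjtail k ltac:(lia)).
Qed.

Lemma is_lim_seq_pos (u : nat -> R) (L : R) :
  (forall n, 0 < u n) -> L <> 0 -> is_lim_seq u L -> 0 < L.
Proof.
  intros Hu HL Hlim.
  assert (H : Rbar_le 0 L).
  { apply (is_lim_seq_le (fun _ => 0) u);
      [intros n; left; apply Hu|apply is_lim_seq_const|exact Hlim]. }
  simpl in H. lra.
Qed.

Lemma opposite_signs_neq r a b s t : r <> 0 -> a * b < 0 -> 0 < s -> 0 < t ->
  r * a * s <> r * b * t.
Proof.
  intros Hr Hab Hs Ht E. rewrite !Rmult_assoc in E.
  apply Rmult_eq_reg_l in E; [|exact Hr].
  assert (Hst : 0 < s * t) by nra.
  assert (Hneg : (a * s) * (b * t) < 0)
    by (replace ((a * s) * (b * t)) with ((a * b) * (s * t)) by ring; nra).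
  rewrite <- E in Hneg. nra.
Qed.

Lemma right_quotients_lim m q p j n (l : Rbar) : QtildeOK m q -> POK m p -> valid m j ->
  (forall k, (n <= k)%nat -> j k = O) ->
  is_lim (fun h => (F m q p (expansion q j + h) - F m q p (expansion q j)) / h) 0 l ->
  is_lim_seq (prefix_prod (ratio p q) j) l.
Proof.
  intros HQ HP Hj Hzero Hl.
  pose proof (fun k => prefix_prod_valid_pos m q (QtildeOK_pos m q HQ) j k Hj) as Hpos.
  refine (is_lim_seq_ext_loc _ _ _ _ (is_lim_comp_seq _ (prefix_prod q j) 0 l Hl _ _)).
  - exists n. intros k Hk. apply F_slope_zero_tail; auto. intros i Hi. apply Hzero. lia.
  - exists O. intros k _ E. injection E. apply Rgt_not_eq, Hpos.
  - exact (QtildeOK_vanish m q HQ j Hj).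
Qed.

Lemma left_quotients_lim m q p j n (l : Rbar) : QtildeOK m q -> POK m p -> valid m j ->
  (forall k, (n <= k)%nat -> j k = m k) ->
  is_lim (fun h => (F m q p (expansion q j + h) - F m q p (expansion q j)) / h) 0 l ->
  is_lim_seq (prefix_prod (ratio p q) j) l.
Proof.
  intros HQ HP Hj Hmax Hl.
  pose proof (fun k => prefix_prod_valid_pos m q (QtildeOK_pos m q HQ) j k Hj) as Hpos.
  refine (is_lim_seq_ext_loc _ _ _ _
            (is_lim_comp_seq _ (fun k => - prefix_prod q j k) 0 l Hl _ _)).
  - exists n. intros k Hk. apply F_slope_max_tail; auto. intros i Hi. apply Hmax. lia.
  - exists O. intros k _ E. injection E. pose proof (Hpos k). lra.
  - rewrite <- Ropp_0. apply -> (is_lim_seq_opp (prefix_prod q j) 0).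
    exact (QtildeOK_vanish m q HQ j Hj).
Qed.

Lemma digit_weight_neq0 m p : POK m p ->
  (forall n c, (1 <= c <= m n)%nat -> p c n * p (c - 1)%nat n < 0) ->
  forall n i, (i <= m n)%nat -> p i n <> 0.
Proof.
  intros HP Hsign n [|i] Hi Hz.
  - pose proof (POK_p0_pos m p HP n). lra.
  - specialize (Hsign n (S i) ltac:(lia)). rewrite Hz in Hsign. lra.
Qed.

Lemma glue_ratio_lims_neq m q p v N c L0 Lm (l : Rbar) : QtildeOK m q -> POK m p ->
  (forall n c, (1 <= c <= m n)%nat -> p c n * p (c - 1)%nat n < 0) ->
  valid m v -> (1 <= c <= m N)%nat ->
  L0 <> 0 -> is_lim_seq (prefix_prod (ratio p q) (fun _ => O)) L0 ->
  Lm <> 0 -> is_lim_seq (prefix_prod (ratio p q) m) Lm ->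
  is_lim_seq (prefix_prod (ratio p q) (glue v N c (fun _ => O))) l ->
  is_lim_seq (prefix_prod (ratio p q) (glue v N (c - 1) m)) l -> False.
Proof.
  intros HQ HP Hsign Hv Hc HL0 HL0lim HLm HLmlim Hlow Hup.
  pose proof (QtildeOK_pos m q HQ) as Hq.
  assert (HT0 : forall n, 0 < prefix_prod (ratio p q) (fun _ => O) n).
  { intros n. apply prefix_prod_pos. intros k.
    apply Rdiv_lt_0_compat; [apply (POK_p0_pos m p HP)|apply Hq; lia]. }
  assert (HTm : forall n, 0 < prefix_prod (ratio p q) m n).
  { intros n. apply prefix_prod_pos. intros k.
    apply Rdiv_lt_0_compat; [apply (POK_pm_pos m p HP)|apply Hq; lia]. }
  pose proof (prefix_prod_tail_lim (ratio p q) (glue v N c (fun _ => O)) (fun _ => O) (S N) L0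
                (fun k Hk => glue_tail v N c _ k Hk) (Rgt_not_eq _ _ (HT0 (S N))) HL0lim)
    as Hlow'.
  pose proof (prefix_prod_tail_lim (ratio p q) (glue v N (c - 1) m) m (S N) Lm
                (fun k Hk => glue_tail v N (c - 1) m k Hk) (Rgt_not_eq _ _ (HTm (S N))) HLmlim)
    as Hup'.
  rewrite (proj2 (prefix_glue (ratio p q) v N c (fun _ => O))) in Hlow'.
  rewrite (proj2 (prefix_glue (ratio p q) v N (c - 1) m)) in Hup'.
  apply is_lim_seq_unique in Hlow, Hlow', Hup, Hup'.
  rewrite Hlow in Hlow'. rewrite Hup in Hup'. rewrite Hlow' in Hup'.
  injection Hup'. apply opposite_signs_neq.
  - apply prefix_prod_neq0. intros k Hz. pose proof (Hq k (v k) (Hv k)).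
    apply (digit_weight_neq0 m p HP Hsign k (v k) (Hv k)).
    replace (p (v k) k) with (ratio p q (v k) k * q (v k) k) by (unfold ratio; field; lra).
    rewrite Hz. ring.
  - pose proof (Hq N c ltac:(lia)). pose proof (Hq N (c - 1)%nat ltac:(lia)).
    unfold ratio.
    replace (p c N / q c N * (p (c - 1)%nat N / q (c - 1)%nat N))
      with ((p c N * p (c - 1)%nat N) / (q c N * q (c - 1)%nat N)) by (field; lra).
    apply Rdiv_neg_pos; [exact (Hsign N c Hc)|nra].
  - exact (Rdiv_lt_0_compat _ _ (is_lim_seq_pos _ L0 HT0 HL0 HL0lim) (HT0 (S N))).
  - exact (Rdiv_lt_0_compat _ _ (is_lim_seq_pos _ Lm HTm HLm HLmlim) (HTm (S N))).
Qed.

Theorem mainTheorem11 (m : nat -> nat) (q p : nat -> nat -> R)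
  (HQ : QtildeOK m q) (HP : POK m p)
  (Hsign : forall n c, (1 <= c <= m n)%nat -> p c n * p (c - 1)%nat n < 0)
  (H0 : exists l : R, l <> 0 /\
        is_lim_seq (fun n => pprod (fun k => p O k / q O k) n) l)
  (Hm : exists l : R, l <> 0 /\
        is_lim_seq (fun n => pprod (fun k => p (m k) k / q (m k) k) n) l) :
  forall x, NegaRational m q x ->
    ~ (exists l : Rbar,
         is_lim (fun h => (F m q p (x + h) - F m q p x) / h) 0 l).
Proof.
  intros x Hx [l Hl].
  destruct H0 as (L0 & HL0 & HL0lim), Hm as (Lm & HLm & HLmlim).
  destruct (NegaRational_glue m q x HQ Hx) as (v & N & c & Hv & Hc & Hx_low).
  assert (Hx_up : x = expansion q (glue v N (c - 1) m)).
  { rewrite Hx_low, expansion_glue_zero.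
    now rewrite (expansion_glue_max m q (QtildeOK_col m q HQ) (QtildeOK_vanish m q HQ)). }
  apply (glue_ratio_lims_neq m q p v N c L0 Lm l HQ HP Hsign Hv Hc HL0 HL0lim HLm HLmlim).
  - rewrite Hx_low in Hl.
    apply (right_quotients_lim m q p _ (S N) l HQ HP); [|apply glue_tail|exact Hl].
    apply glue_valid; [exact Hv|lia|intros k; apply Nat.le_0_l].
  - rewrite Hx_up in Hl.
    apply (left_quotients_lim m q p _ (S N) l HQ HP); [|apply glue_tail|exact Hl].
    apply glue_valid; [exact Hv|lia|intros k; apply le_n].
Qed.
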